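(* Let $\mathcal{C}$ be an ordinary smooth absolutely irreducible projective curve of genus $g\ge1$ over $\mathbb{F}_q$ with absolutely simple Jacobian, and suppose that the Galois group of the splitting field of $P(T)$ over $\mathbb{Q}$ is the Weyl group $\mathcal{W}_g$ of $\mathrm{Sp}(2g)$, acting on the roots so that for each $i\in\{1,\ldots,g\}$ it contains an automorphism exchanging $\tau_i$ and $\overline{\tau_i}$ while fixing $\tau_j$ and $\overline{\tau_j}$ for all $j\neq i$. Then the Frobenius angles $\vartheta_1,\ldots,\vartheta_g$ are linearly independent modulo $1$; equivalently, there is no nonzero $(k_0,\ldots,k_g)\in\mathbb{Z}^{g+1}$ with $\prod_{i=1}^g\tau_i^{k_i}=q^{k_0}$.
   Context: Let $\mathcal{C}$ be a smooth projective curve of genus $g\ge1$ over the finite field $\mathbb{F}_q$ ($q$ a power of the prime $p$). The numerator of its zeta function is $P(T)=\prod_{j=1}^{2g}(1-\tau_j T)\in\mathbb{Z}[T]$, where the Frobenius eigenvalues $\tau_j$ satisfy $|\tau_j|=q^{1/2}$ and $\tau_{j+g}=\overline{\tau_j}$ for $j=1,\ldots,g$. Write $\tau_j = q^{1/2}e^{\pi i \vartheta_j}$ and $\tau_{j+g}=q^{1/2}e^{-\pi i\vartheta_j}$ with $\vartheta_j\in[0,1]$; these $\vartheta_j$ ($j=1,\ldots,g$) are the Frobenius angles. Fixing an embedding $\overline{\mathbb{Q}}\hookrightarrow\overline{\mathbb{Q}}_p$, the curve is ordinary if at least half of $\tau_1,\ldots,\tau_{2g}$ are $p$-adic units. Real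 numbers $\psi_1,\ldots,\psi_s$ are linearly independent modulo $1$ if $1,\psi_1,\ldots,\psi_s$ are linearly independent over $\mathbb{Z}$. The Weyl group $\mathcal{W}_g$ of $\mathrm{Sp}(2g)$ is the group of signed permutations of the $g$ pairs $\{\tau_i,\overline{\tau_i}\}$ (permuting the pairs and independently swapping elements within pairs). *)

From HB Require Import structures.
From mathcomp Require Import all_boot all_order all_algebra all_fingroup all_field.
Set Implicit Arguments. Unset Strict Implicit. Unset Printing Implicit Defensive.
Import Order.TTheory GRing.Theory Num.Theory.
Local Open Scope ring_scope.

(* A prime ideal [pr] of the ring [Aint] of algebraic integers (in algC) lying
   above the rational prime p.  Fixing an embedding Qbar -> Qbar_p is the same
   as fixing such a prime (the pullback of the maximal ideal of Zbar_p). *)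
Definition padic_prime_above (p : nat) (pr : algC -> Prop) : Prop :=
  [/\ (forall x, pr x -> x \in Aint),
      (forall x y, pr x -> pr y -> pr (x - y)),
      (forall a x, a \in Aint -> pr x -> pr (a * x)),
      (forall a b, a \in Aint -> b \in Aint -> pr (a * b) -> (pr a \/ pr b)) &
      ~ pr 1 /\ pr p%:R].

(* x is a p-adic unit (valuation 0 at the prime pr): x lies in the
   multiplicative group of the localisation of Aint at pr. *)
Definition padic_unit (pr : algC -> Prop) (x : algC) : Prop :=
  exists a b, [/\ a \in Aint, b \in Aint, ~ pr a, ~ pr b & x = a / b].

(* The 2g Frobenius eigenvalues: (j, false) |-> tau_j, (j, true) |-> conj tau_j
   (i.e. tau_{j+g}). *)
Definition eig (g : nat) (tau : 'I_g -> algC) (x : 'I_g * bool) : algC :=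
  if x.2 then (tau x.1)^* else tau x.1.

Definition zetaP (g : nat) (tau : 'I_g -> algC) : {poly algC} :=
  \prod_(j < g) ((1 - tau j *: 'X) * (1 - (tau j)^* *: 'X)).

Definition ordinary (g : nat) (pr : algC -> Prop) (tau : 'I_g -> algC) : Prop :=
  exists S : {set ('I_g * bool)%type}, (g <= #|S|)%N /\ forall x, x \in S -> padic_unit pr (eig tau x).

(* Signed permutation (pi, eps) in W_g applied to the eigenvalue labels:
   tau_i |-> tau_{pi i} or its conjugate according to eps i. *)
Definition signed_img (g : nat) (tau : 'I_g -> algC) (pi : {perm 'I_g}) (eps : 'I_g -> bool)
  (x : 'I_g * bool) : algC :=
  eig tau (pi x.1, x.2 (+) eps x.1).

Definition acts_as (g : nat) (tau : 'I_g -> algC) (sigma : {rmorphism algC -> algC})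
  (pi : {perm 'I_g}) (eps : 'I_g -> bool) : Prop :=
  forall x, sigma (eig tau x) = signed_img tau pi eps x.

(* The Galois group of the splitting field of P over Q (= restrictions of
   automorphisms of algC to the roots) is exactly W_g acting by signed
   permutations of the pairs {tau_i, conj tau_i}. *)
Definition galois_is_weyl (g : nat) (tau : 'I_g -> algC) : Prop :=
  (forall sigma : {rmorphism algC -> algC}, exists pi eps, acts_as tau sigma pi eps) /\
  (forall pi eps, exists sigma : {rmorphism algC -> algC}, acts_as tau sigma pi eps).

From HB Require Import structures.
From mathcomp Require Import all_boot all_order all_algebra all_fingroup all_field.
From Stdlib Require Import Classical.
Import Order.TTheory GRing.Theory Num.Theory.
Local Open Scope ring_scope.

(* Suppose prod_i tau_i^(k_i) = q^(k_0).  The argument is p-adic: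
   1. the p-adic units (for the fixed prime pr above p) form a multiplicative
      group, whereas a nonzero integral power of q = p^n is never a unit;
   2. since tau_j * conj tau_j = q, at most one element of each pair
      {tau_j, conj tau_j} is a unit; ordinarity (at least g units among the
      2g eigenvalues) then forces EXACTLY one unit in every pair, by counting;
   3. applying the Galois automorphism that swaps tau_i and conj tau_i and
      fixes the other pairs to the relation gives tau_i^(k_i) = conj tau_i^(k_i);
   4. hence q^(k_i) = (tau_i conj tau_i)^(k_i) is the square of the k_i-th
      power of whichever of tau_i, conj tau_i is a unit, so q^(k_i) is a unit
      and k_i = 0; the relation then reads q^(k_0) = 1, so k_0 = 0.
   Steps 1 and 2 are developed first (in a section over a fixed prime), then
   step 3, and the theorem assembles them. *)

Section PadicUnits.

Context {p : nat} {pr : algC -> Prop}.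
Hypothesis pr_above_p : padic_prime_above p pr.

Lemma padic_unit1 : padic_unit pr 1.
Proof.
case: pr_above_p => _ _ _ _ [pr_n1 _].
by exists 1, 1; split; rewrite ?Aint1 ?divr1.
Qed.

(* Units are closed under products, because pr is prime. *)
Lemma padic_unitM {x y : algC} : padic_unit pr x -> padic_unit pr y -> padic_unit pr (x * y).
Proof.
case: pr_above_p => _ _ _ pr_prime _ [a [b [Aa Ab na nb ->]]] [c [d [Ac Ad nc nd ->]]].
exists (a * c), (b * d); split; rewrite ?rpredM ?mulf_div //.
- by case/(pr_prime _ _ Aa Ac).
- by case/(pr_prime _ _ Ab Ad).
Qed.

Lemma padic_unitV {x : algC} : padic_unit pr x -> padic_unit pr x^-1.
Proof. by case=> [a [b [Aa Ab na nb ->]]]; exists b, a; rewrite invf_div. Qed.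

Lemma padic_unitXz (k : int) {x : algC} : padic_unit pr x -> padic_unit pr (x ^ k).
Proof.
have unitXn n : padic_unit pr x -> padic_unit pr (x ^+ n).
  move=> ux; elim: n => [|n IHn]; first by rewrite expr0; exact: padic_unit1.
  by rewrite exprS; apply: padic_unitM.
by case: k => n ux /=; [exact: unitXn | exact/padic_unitV/unitXn].
Qed.

(* A positive power of p lies in pr, so p^e is a unit only for e = 0. *)
Lemma padic_unit_pX_eq0 e : padic_unit pr (p ^ e)%N%:R -> e = 0%N.
Proof.
case: pr_above_p => _ _ pr_mul _ [_ pr_p].
case: e => // e [a [b [Aa Ab na nb pe_eq]]]; case: na.
have b_neq0 : b != 0.
  by apply/eqP => b0; apply: nb; rewrite b0 -(mul0r p%:R); exact: pr_mul (rpred0 _) pr_p.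
have -> : a = (p ^ e.+1)%N%:R * b by rewrite pe_eq divfK.
by rewrite expnS natrM -mulrA mulrC; apply: pr_mul; rewrite // rpredM ?rpred_nat.
Qed.

Lemma padic_unit_qXz_eq0 {q : nat} : (exists n, (0 < n)%N /\ q = (p ^ n)%N) ->
  forall k : int, padic_unit pr ((q%:R : algC) ^ k) -> k = 0.
Proof.
case=> n [n_gt0 ->] [] m.
  rewrite -exprnP -natrX -expnM => /padic_unit_pX_eq0/eqP.
  by rewrite muln_eq0 (gtn_eqF n_gt0) /= => /eqP ->.
rewrite NegzE -exprnN -natrX -expnM => /padic_unitV; rewrite invrK.
by move=> /padic_unit_pX_eq0/eqP; rewrite muln_eq0 (gtn_eqF n_gt0).
Qed.

End PadicUnits.

Lemma one_in_each_pair {g} (P : 'I_g * bool -> Prop) {S : {set 'I_g * bool}} :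
  (g <= #|S|)%N -> (forall x, x \in S -> P x) ->
  (forall j, ~ (P (j, false) /\ P (j, true))) ->
  forall i, P (i, false) \/ P (i, true).
Proof.
move=> S_large S_P no_pair i; apply: NNPP => not_i.
have fst_inj : {in S &, injective (@fst 'I_g bool)}.
  move=> [j b] [j' b'] /S_P Pjb /S_P Pj'b' /= eq_jj'; subst j'.
  by case: b b' Pjb Pj'b' => [] [] // Pjb Pj'b'; case: (no_pair j).
have fst_S_sub : (@fst 'I_g bool) @: S \subset [set~ i].
  apply/subsetP => _ /imsetP [[j b] /S_P Pjb ->]; rewrite !inE /=.
  by apply/eqP => eq_ji; subst j; apply: not_i; case: b Pjb; [right | left].
move: (subset_leq_card fst_S_sub).
rewrite (card_in_imset fst_inj) cardsC1 card_ord => S_small.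
have g_gt0 : (0 < g)%N := leq_ltn_trans (leq0n i) (ltn_ord i).
by move: (leq_trans S_large S_small); rewrite leqNgt ltn_predL g_gt0.
Qed.

Lemma swap_exponent {g} {tau : 'I_g -> algC} {q : nat} {k0 : int} {k : 'I_g -> int}
    {sigma : {rmorphism algC -> algC}} {i : 'I_g} :
  (forall j, tau j != 0) ->
  sigma (tau i) = (tau i)^* -> (forall j, j != i -> sigma (tau j) = tau j) ->
  \prod_(j < g) tau j ^ k j = (q%:R : algC) ^ k0 ->
  tau i ^ k i = (tau i)^* ^ k i.
Proof.
move=> tau_neq0 sigma_i sigma_j rel.
have := congr1 sigma rel; rewrite rmorph_prod fmorphXz rmorph_nat -rel.
rewrite (bigD1 i) //= [in RHS](bigD1 i) //= fmorphXz sigma_i.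
under eq_bigr => j /sigma_j sj do rewrite fmorphXz sj.
move/mulIf => -> //; rewrite prodf_seq_neq0.
by apply/allP => j _; apply/implyP => _; apply: expfz_neq0.
Qed.

Theorem mainTheorem6 (p q g : nat) (tau : 'I_g -> algC) (pr : algC -> Prop) :
  prime p -> (exists n, (0 < n)%N /\ q = (p ^ n)%N) -> (1 <= g)%N ->
  zetaP tau \is a polyOver Num.int ->
  (forall j, `|tau j| ^+ 2 = q%:R) ->
  (forall j, 0 <= 'Im (tau j)) ->
  padic_prime_above p pr ->
  ordinary pr tau ->
  galois_is_weyl tau ->
  (forall i, exists sigma : {rmorphism algC -> algC},
      sigma (tau i) = (tau i)^* /\ sigma ((tau i)^*) = tau i /\
      (forall j, j != i -> sigma (tau j) = tau j /\ sigma ((tau j)^*) = (tau j)^*)) ->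
  forall (k0 : int) (k : 'I_g -> int),
    \prod_(i < g) tau i ^ k i = (q%:R : algC) ^ k0 ->
    k0 = 0 /\ (forall i, k i = 0).
Proof.
move=> p_prime q_pow _ _ tau_norm _ pr_p [S [S_large S_units]] _ swaps k0 k rel.
have unit_q_eq0 := padic_unit_qXz_eq0 pr_p q_pow.
have tau_conj j : tau j * (tau j)^* = q%:R by rewrite -normCK.
have q_neq0 : (q%:R : algC) != 0.
  by case: q_pow => n [_ ->]; rewrite pnatr_eq0 -lt0n expn_gt0 prime_gt0.
have tau_neq0 j : tau j != 0.
  by apply: contraNneq q_neq0 => tau0; rewrite -(tau_conj j) tau0 mul0r.
have unit_in_pair : forall i, padic_unit pr (tau i) \/ padic_unit pr (tau i)^*.
  apply: (one_in_each_pair (fun x => padic_unit pr (eig tau x)) S_large S_units).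
  move=> j [u u']; have := unit_q_eq0 1; rewrite expr1z -(tau_conj j).
  by move/(_ (padic_unitM pr_p u u')).
have k_eq0 i : k i = 0.
  have [sigma [sigma_i [_ sigma_j]]] := swaps i.
  have swap := swap_exponent tau_neq0 sigma_i (fun j ji => (sigma_j j ji).1) rel.
  apply: unit_q_eq0; rewrite -(tau_conj i) expfzMl.
  case: (unit_in_pair i) => /(padic_unitXz pr_p (k i)) u.
    by rewrite -swap; exact: (padic_unitM pr_p u u).
  by rewrite swap; exact: (padic_unitM pr_p u u).
split=> //; move: rel; rewrite big1 => [q_k0|j _]; last by rewrite k_eq0 expr0z.
by apply: unit_q_eq0; rewrite -q_k0; exact: padic_unit1 pr_p.
Qed.
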